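(* Let $R$ be a commutative ring containing $\mathbb{Q}$, let $\boldsymbol{a}\in H_R$ with $a_0\in R^*$, and let $\boldsymbol{\lambda}^{(-1)}:=\lambda_{+,0}(\boldsymbol{a})^{(-1)}$. Put $\bar\lambda_i=\boldsymbol{\lambda}^{(-1)}[i]/i!$ for $i\ge1$. Then for all $n\ge0$, $$\boldsymbol{\lambda}^{(-1)}[n+1]=n!\sum_{k=0}^{n}\frac{\boldsymbol{a}^{-1}[k]}{k!}\,B_{n,k}\big(\bar\lambda_1,\dots,\bar\lambda_{n-k+1}\big).$$
   Context: $H_R$ is the set of sequences $\boldsymbol{a}=(a_n)_{n\ge0}$ in $R$, $\boldsymbol{a}[n]=a_n$. $\boldsymbol{a}^{-1}$ is the inverse for the Hurwitz product $(\boldsymbol{a}\star\boldsymbol{b})_n=\sum_{h=0}^n\binom{n}{h}a_hb_{n-h}$ (identity $(1,0,0,\dots)$). For $\boldsymbol{b}$ with $b_0=0$, $\boldsymbol{a}\circ\boldsymbol{b}$ is the sequence whose exponential generating function is $A(B(t))$, where $A(t)=\sum_n a_nt^n/n!$, $B(t)=\sum_n b_nt^n/n!$; its identity is $(0,1,0,\dots)$ and $\boldsymbol{c}^{(-1)}$ denotes the $\circ$-inverse (which exists iff $c_0=0$, $c_1\in R^*$). $\lambda_{+,0}(a_0,a_1,\dots)=(0,a_0,a_1,\dots)$. The partial ordinary Bell polynomials $B_{n,k}$ are defined by $B_{0,0}=1$, $B_{n,0}=0$ ($n\ge1$), $B_{0,k}=0$ ($k\ge1$), and $\big(\sum_{n\ge1}y_nz^n\big)^k=\sum_{n\ge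 k}B_{n,k}(y_1,\dots,y_{n-k+1})z^n$. *)

From HB Require Import structures.
From mathcomp Require Import all_boot all_order all_algebra.
Set Implicit Arguments. Unset Strict Implicit. Unset Printing Implicit Defensive.
Import Order.TTheory GRing.Theory Num.Theory.
Local Open Scope ring_scope.

(* Sequences in H_R are represented as functions nat -> R. *)

Definition hurwitz (R : comUnitRingType) (a b : nat -> R) : nat -> R :=
  fun n => \sum_(h < n.+1) 'C(n, h)%:R * a h * b (n - h)%N.

Definition hurwitz_one (R : comUnitRingType) : nat -> R :=
  fun n => if n == 0%N then 1 else 0.

Definition comp_id (R : comUnitRingType) : nat -> R :=
  fun n => if n == 1%N then 1 else 0.

Definition lambda_plus0 (R : comUnitRingType) (a : nat -> R) : nat -> R :=
  fun n => if n is m.+1 then a m else 0.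

(* Only y_1..y_n can
   contribute to the z^n coefficient, so the series is truncated at degree n. *)
Definition bellB (R : comUnitRingType) (n k : nat) (y : nat -> R) : R :=
  ((\sum_(1 <= i < n.+1) y i *: 'X^i : {poly R}) ^+ k)`_n.

(* Composition a o b (for b_0 = 0): the sequence whose EGF is A(B(t)),
   i.e. (a o b)_n = n! [t^n] sum_k (a_k/k!) B(t)^k with
   B(t) = sum_{j>=1} (b_j/j!) t^j  (R is assumed to contain Q where used). *)
Definition hcomp (R : comUnitRingType) (a b : nat -> R) : nat -> R :=
  fun n => n`!%:R * \sum_(k < n.+1) (a k / k`!%:R) *
     ((\sum_(1 <= j < n.+1) (b j / j`!%:R) *: 'X^j : {poly R}) ^+ k)`_n.

From HB Require Import structures.
From mathcomp Require Import all_boot all_order all_algebra.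
From mathcomp Require Import ring zify.
Set Implicit Arguments. Unset Strict Implicit. Unset Printing Implicit Defensive.
Import GRing.Theory.
Local Open Scope ring_scope.

(* Pass to truncated exponential generating functions
   [egf N x = sum_(k < N) x_k / k! t^k], where the Hurwitz product becomes the
   product and [hcomp] becomes composition.  With [L] the EGF of
   [lambda_plus0 a] and [M] that of [lam_inv], [L' = A] and [L(M) = t];
   differentiating gives [A(M) M' = 1], while [A Ainv = 1] gives
   [A(M) Ainv(M) = 1], hence [M' = Ainv(M)].  Comparing the coefficients of
   [t^n] is the claimed formula. *)

Section TruncatedPolynomials.
Variable R : comNzRingType.
Implicit Types (p q r : {poly R}) (d : nat).

Definition eqmodXn d p q : Prop := forall i, (i < d)%N -> p`_i = q`_i.

Lemma eqmodXn_sym d p q : eqmodXn d p q -> eqmodXn d q p.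
Proof. by move=> epq i lt_id; rewrite epq. Qed.

Lemma eqmodXn_trans d p q r :
  eqmodXn d p q -> eqmodXn d q r -> eqmodXn d p r.
Proof. by move=> epq eqr i lt_id; rewrite epq // eqr. Qed.

Lemma eqmodXnM d p p' q q' :
  eqmodXn d p p' -> eqmodXn d q q' -> eqmodXn d (p * q) (p' * q').
Proof.
move=> epp eqq i lt_id; rewrite !coefM; apply: eq_bigr => j _.
have lt_ji := ltn_ord j; rewrite epp ?eqq //; lia.
Qed.

Lemma eqmodXnX d p p' k : eqmodXn d p p' -> eqmodXn d (p ^+ k) (p' ^+ k).
Proof.
move=> epp; elim: k => [|k IHk] //.
by rewrite !exprS; apply: eqmodXnM.
Qed.

Lemma eqmodXn_deriv d p q : eqmodXn d.+1 p q -> eqmodXn d p^`() q^`().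
Proof. by move=> epq i lt_id; rewrite !coef_deriv epq. Qed.

Lemma coef_exp_coef0 p k i : p`_0 = 0 -> (i < k)%N -> (p ^+ k)`_i = 0.
Proof.
move=> p0; elim: k i => [|k IHk] i lt_ik //.
rewrite exprS coefM big1 // => -[[|j] /= lt_ji _]; first by rewrite p0 mul0r.
rewrite IHk ?mulr0 //; lia.
Qed.

Lemma coef_comp_poly_coef0 p q j : q`_0 = 0 ->
  (p \Po q)`_j = \sum_(k < j.+1) p`_k * (q ^+ k)`_j.
Proof.
move=> q0; rewrite coef_comp_poly.
pose f k := p`_k * (q ^+ k)`_j.
have sum_trunc N1 N2 : (forall k, (N1 <= k)%N -> f k = 0) -> (N1 <= N2)%N ->
    \sum_(k < N2) f k = \sum_(k < N1) f k.
  move=> f0 le_N12; rewrite (big_ord_widen _ f le_N12) [RHS]big_mkcond /=.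
  by apply: eq_bigr => k _; case: ltnP => // /f0.
rewrite -(sum_trunc (size p) (size p + j.+1)%N _ (leq_addr _ _)); last first.
  by move=> k le_pk; rewrite /f nth_default ?mul0r.
apply: sum_trunc; last exact: leq_addl.
by move=> k lt_jk; rewrite /f coef_exp_coef0 ?mulr0.
Qed.

Lemma eqmodXn_comp d p p' q q' : q`_0 = 0 -> q'`_0 = 0 ->
  eqmodXn d p p' -> eqmodXn d q q' -> eqmodXn d (p \Po q) (p' \Po q').
Proof.
move=> q0 q'0 epp eqq i lt_id; rewrite !coef_comp_poly_coef0 //.
apply: eq_bigr => k _; have lt_ki := ltn_ord k.
rewrite (eqmodXnX k eqq) ?epp //; lia.
Qed.

Lemma eqmodXn_inv_uniq d p q r :
  eqmodXn d (p * q) 1 -> eqmodXn d (p * r) 1 -> eqmodXn d q r.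
Proof.
move=> pq1 pr1.
have q_qpr : eqmodXn d q (q * (p * r)).
  rewrite -[X in eqmodXn _ X _]mulr1.
  by apply: eqmodXnM => //; apply: eqmodXn_sym.
apply: eqmodXn_trans q_qpr _.
by rewrite mulrA (mulrC q) -[X in eqmodXn _ _ X]mul1r; apply: eqmodXnM.
Qed.

End TruncatedPolynomials.

Section ExponentialGeneratingFunctions.
Variable R : comUnitRingType.
Hypothesis natS_unit : forall m : nat, m.+1%:R \is a @GRing.unit R.
Implicit Types (a b : nat -> R) (N : nat).

Definition egf N a : {poly R} := \poly_(k < N) (a k / k`!%:R).

Lemma fact_unit k : k`!%:R \is a @GRing.unit R.
Proof. by rewrite -(prednK (fact_gt0 k)) natS_unit. Qed.

Lemma mulrn_divr_factS (x : R) i : x / (i.+1)`!%:R *+ i.+1 = x / i`!%:R.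
Proof.
by rewrite factS (@natrM R i.+1) invrM ?fact_unit // mulrA -mulr_natr divrK.
Qed.

Lemma egf_trunc d N a : (d <= N)%N -> eqmodXn d (egf N a) (egf d a).
Proof. by move=> le_dN i lt_id; rewrite !coef_poly lt_id (leq_trans lt_id). Qed.

Lemma egf_sum_from1 N b : b 0%N = 0 ->
  \sum_(1 <= j < N.+1) (b j / j`!%:R) *: 'X^j = egf N.+1 b.
Proof.
move=> b0; rewrite /egf poly_def.
rewrite -(big_mkord xpredT (fun j => (b j / j`!%:R) *: 'X^j)).
by rewrite [RHS]big_ltn // b0 mul0r scale0r add0r.
Qed.

Lemma egf_coef0 N b : b 0%N = 0 -> (egf N b)`_0 = 0.
Proof. by move=> b0; rewrite coef_poly b0 mul0r if_same. Qed.

Lemma egf_hurwitz_one N : egf N.+1 (hurwitz_one R) = 1.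
Proof.
apply/polyP => i; rewrite coef_poly coef1 /hurwitz_one.
by case: i => [|i]; rewrite /= ?invr1 ?mulr1 ?mul0r ?if_same.
Qed.

Lemma egf_comp_id N : egf N.+2 (comp_id R) = 'X.
Proof.
apply/polyP => i; rewrite coef_poly coefX /comp_id.
by case: i => [|[|i]]; rewrite /= ?invr1 ?mulr1 ?mul0r ?if_same.
Qed.

Lemma deriv_egf_lambda_plus0 N a : (egf N.+1 (lambda_plus0 a))^`() = egf N a.
Proof.
apply/polyP => i; rewrite coef_deriv !coef_poly ltnS.
by case: ltnP => _; rewrite ?mul0rn ?mulrn_divr_factS.
Qed.

Lemma coef_deriv_egf N b i : (i.+1 < N)%N ->
  (egf N b)^`()`_i = b i.+1 / i`!%:R.
Proof.
by move=> lt_iN; rewrite coef_deriv coef_poly lt_iN mulrn_divr_factS.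
Qed.

Lemma coef_comp_egf N a (q : {poly R}) i : q`_0 = 0 -> (i < N)%N ->
  (egf N a \Po q)`_i = \sum_(k < i.+1) a k / k`!%:R * (q ^+ k)`_i.
Proof.
move=> q0 lt_iN; rewrite coef_comp_poly_coef0 //; apply: eq_bigr => k _.
by rewrite coef_poly (leq_ltn_trans (ltnSE (ltn_ord k)) lt_iN).
Qed.

(* [C(i,j) / i! = 1 / (j! (i-j)!)]. *)
Lemma egf_mul_hurwitz N a b :
  eqmodXn N (egf N a * egf N b) (egf N (hurwitz a b)).
Proof.
move=> i lt_iN; rewrite coefM coef_poly lt_iN /hurwitz mulr_suml.
apply: eq_bigr => -[j /= le_ji] _; rewrite !coef_poly.
rewrite (leq_ltn_trans (ltnSE le_ji) lt_iN).
rewrite (leq_ltn_trans (leq_subr j i) lt_iN).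
have binE : (i`!%:R : R) = 'C(i, j)%:R * (j`!%:R * (i - j)`!%:R).
  by rewrite -!natrM bin_fact // -ltnS.
have bin_unit : 'C(i, j)%:R \is a @GRing.unit R.
  by rewrite -[X in X%:R](@prednK 'C(i, j)) ?natS_unit // bin_gt0 -ltnS.
rewrite binE invrM ?unitrM ?fact_unit // invrM ?fact_unit //.
rewrite [RHS](_ : _ = ('C(i, j)%:R^-1 * 'C(i, j)%:R) *
   (a j / j`!%:R * (b (i - j)%N / (i - j)`!%:R))); last by ring.
by rewrite mulVr ?mul1r.
Qed.

Lemma egf_comp_hcomp N a b : b 0%N = 0 ->
  eqmodXn N (egf N a \Po egf N b) (egf N (hcomp a b)).
Proof.
move=> b0 i lt_iN; rewrite coef_poly lt_iN /hcomp egf_sum_from1 //.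
rewrite mulrC mulKr ?fact_unit // -(@coef_comp_egf i.+1) ?egf_coef0 //.
by apply: (@eqmodXn_comp _ i.+1); rewrite ?egf_coef0 //; apply: egf_trunc.
Qed.

End ExponentialGeneratingFunctions.

Theorem mainTheorem2 (R : comUnitRingType)
  (hQ : forall m : nat, (m.+1)%:R \is a @GRing.unit R)
  (a ainv lam_inv : nat -> R)
  (ha0 : a 0%N \is a GRing.unit)
  (hainv : hurwitz a ainv = hurwitz_one R)
  (hlam0 : lam_inv 0%N = 0)
  (hlamL : hcomp (lambda_plus0 a) lam_inv = comp_id R)
  (hlamR : hcomp lam_inv (lambda_plus0 a) = comp_id R)
  (n : nat) :
  lam_inv n.+1 =
    n`!%:R * \sum_(k < n.+1) (ainv k / k`!%:R) *
      bellB n k (fun i => lam_inv i / i`!%:R).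
Proof.
set M := egf n.+2 lam_inv.
have M0 : M`_0 = 0 by apply: egf_coef0.
have LM_X : eqmodXn n.+2 (egf n.+2 (lambda_plus0 a) \Po M) 'X.
  by rewrite -(egf_comp_id _ n) -hlamL; apply: egf_comp_hcomp.
have AM_dM : eqmodXn n.+1 ((egf n.+1 a \Po M) * M^`()) 1.
  rewrite -derivX -(deriv_egf_lambda_plus0 hQ n.+1 a) -deriv_comp.
  exact: eqmodXn_deriv.
have AM_BM : eqmodXn n.+1 ((egf n.+1 a \Po M) * (egf n.+1 ainv \Po M)) 1.
  have -> : 1 = 1 \Po M by rewrite -polyC1 comp_polyC.
  rewrite -comp_polyM -(egf_hurwitz_one _ n) -hainv.
  by apply: eqmodXn_comp => //; apply: egf_mul_hurwitz.
have := eqmodXn_inv_uniq AM_dM AM_BM (ltnSn n).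
rewrite coef_deriv_egf // coef_comp_egf // => /(canRL (divrK (fact_unit hQ n))).
rewrite mulrC => ->; congr (_ * _); apply: eq_bigr => k _.
rewrite /bellB egf_sum_from1 //; congr (_ * _).
by apply: (eqmodXnX (d := n.+1)) => //; apply: egf_trunc.
Qed.
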